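(* Consider the planar system $$\frac{dC}{dt} = 1 + m_1\frac{CL}{1+L} - m_2\frac{CL}{1+m_3C} - m_4C,\qquad \frac{dL}{dt} = L - m_5 CL,$$ with positive parameters $m_1,\dots,m_5$, and its equilibria $E_1=(1/m_4,0)$, $E_2=(1/m_5,L_2)$, $E_3=(1/m_5,L_3)$, where $L_2=\frac{-b-\sqrt{\Delta}}{2a}$, $L_3=\frac{-b+\sqrt{\Delta}}{2a}$ with $a=-\frac{m_2}{1+m_3/m_5}$, $b=m_1+m_5-m_4-\frac{m_2}{1+m_3/m_5}$, $c=m_5-m_4$, $\Delta=b^2-4ac$. The equilibria undergo a transcritical bifurcation at $m_4=m_5$: - when $m_2>m_1(1+m_3/m_5)$, $E_1$ and $E_2$ undergo a transcritical bifurcation; - when $m_2<m_1(1+m_3/m_5)$, $E_1$ and $E_3$ undergo a transcritical bifurcation.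
   Context: Nondimensional model of CAR-T cells $C$ and lymphoma cells $L$. $E_1$ is the tumor-free equilibrium; $E_2,E_3$ are the coexistence equilibria, whose $L$-coordinates are the roots of $aL^2+bL+c=0$. *)

From Stdlib Require Import Reals.
From Coquelicot Require Import Coquelicot.
Open Scope R_scope.

(* The CAR-T / lymphoma vector field; the bifurcation parameter is m4. *)
Definition dC (m1 m2 m3 m4 : R) (C L : R) : R :=
  1 + m1 * (C * L / (1 + L)) - m2 * (C * L / (1 + m3 * C)) - m4 * C.
Definition dL (m5 : R) (C L : R) : R := L - m5 * C * L.

Definition field (m1 m2 m3 m5 : R) (m4 : R) (x : R * R) : R * R :=
  (dC m1 m2 m3 m4 (fst x) (snd x), dL m5 (fst x) (snd x)).

Definition qa (m2 m3 m5 : R) : R := - (m2 / (1 + m3 / m5)).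
Definition qb (m1 m2 m3 m4 m5 : R) : R := m1 + m5 - m4 - m2 / (1 + m3 / m5).
Definition qc (m4 m5 : R) : R := m5 - m4.
Definition qDelta (m1 m2 m3 m4 m5 : R) : R :=
  qb m1 m2 m3 m4 m5 ^ 2 - 4 * qa m2 m3 m5 * qc m4 m5.

Definition L2 (m1 m2 m3 m4 m5 : R) : R :=
  (- qb m1 m2 m3 m4 m5 - sqrt (qDelta m1 m2 m3 m4 m5)) / (2 * qa m2 m3 m5).
Definition L3 (m1 m2 m3 m4 m5 : R) : R :=
  (- qb m1 m2 m3 m4 m5 + sqrt (qDelta m1 m2 m3 m4 m5)) / (2 * qa m2 m3 m5).

Definition Eq1 (m4 : R) : R * R := (1 / m4, 0).
Definition Eq2 (m1 m2 m3 m5 : R) (m4 : R) : R * R := (1 / m5, L2 m1 m2 m3 m4 m5).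
Definition Eq3 (m1 m2 m3 m5 : R) (m4 : R) : R * R := (1 / m5, L3 m1 m2 m3 m4 m5).

Definition J11 (G : R * R -> R * R) (x : R * R) : R :=
  Derive (fun c => fst (G (c, snd x))) (fst x).
Definition J12 (G : R * R -> R * R) (x : R * R) : R :=
  Derive (fun l => fst (G (fst x, l))) (snd x).
Definition J21 (G : R * R -> R * R) (x : R * R) : R :=
  Derive (fun c => snd (G (c, snd x))) (fst x).
Definition J22 (G : R * R -> R * R) (x : R * R) : R :=
  Derive (fun l => snd (G (fst x, l))) (snd x).

Definition eigenvalue (G : R * R -> R * R) (x : R * R) (lam : C) : Prop :=
  Cminus (Cmult (Cminus (RtoC (J11 G x)) lam) (Cminus (RtoC (J22 G x)) lam))
         (RtoC (J12 G x * J21 G x)) = RtoC 0.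

Definition is_equilibrium (G : R * R -> R * R) (x : R * R) : Prop :=
  G x = (0, 0).

Definition lin_stable (G : R * R -> R * R) (x : R * R) : Prop :=
  forall lam, eigenvalue G x lam -> Re lam < 0.
Definition lin_unstable (G : R * R -> R * R) (x : R * R) : Prop :=
  exists lam, eigenvalue G x lam /\ Re lam > 0.

Definition transcritical (F : R -> R * R -> R * R) (e f : R -> R * R) (mu0 : R)
  : Prop :=
  exists delta : R, delta > 0 /\
    (forall mu, Rabs (mu - mu0) < delta ->
       is_equilibrium (F mu) (e mu) /\ is_equilibrium (F mu) (f mu)) /\
    continuous (fun mu => fst (e mu)) mu0 /\ continuous (fun mu => snd (e mu)) mu0 /\
    continuous (fun mu => fst (f mu)) mu0 /\ continuous (fun mu => snd (f mu)) mu0 /\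
    e mu0 = f mu0 /\
    eigenvalue (F mu0) (e mu0) (RtoC 0) /\
    (forall mu, 0 < Rabs (mu - mu0) < delta -> e mu <> f mu) /\
    ( ((forall mu, mu0 - delta < mu < mu0 ->
          lin_stable (F mu) (e mu) /\ lin_unstable (F mu) (f mu)) /\
       (forall mu, mu0 < mu < mu0 + delta ->
          lin_unstable (F mu) (e mu) /\ lin_stable (F mu) (f mu)))
    \/
      ((forall mu, mu0 - delta < mu < mu0 ->
          lin_unstable (F mu) (e mu) /\ lin_stable (F mu) (f mu)) /\
       (forall mu, mu0 < mu < mu0 + delta ->
          lin_stable (F mu) (e mu) /\ lin_unstable (F mu) (f mu))) ).

From Stdlib Require Import Reals Lra.
From Coquelicot Require Import Coquelicot.
Open Scope R_scope.

(* Write k = m2 / (1 + m3/m5). Along the line C = 1/m5 the entry J22 vanishes, so the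
   Jacobian determinant at (1/m5, L) is L (m1/(1+L)^2 - k), while the quadratic of the
   coexistence equilibria factors as L (m1 + m5 - m4 - k - k L) = m4 - m5. As m4 -> m5
   the root through 0 tends to 0 and both brackets tend to m1 - k, which is nonzero, so
   the determinant along that branch has the sign of m4 - m5. At E1 the determinant is
   m5 - m4, and both traces stay close to -m5 < 0: the two branches meet at m4 = m5 and
   exchange stability there. The sign of m1 - k decides whether the root through 0 is
   L2 or L3. *)

Definition jac_trace (G : R * R -> R * R) (x : R * R) : R := J11 G x + J22 G x.

Definition jac_det (G : R * R -> R * R) (x : R * R) : R :=
  J11 G x * J22 G x - J12 G x * J21 G x.

Lemma eigenvalue_iff G x u v :
  eigenvalue G x (u, v) <->
  u * u - v * v - jac_trace G x * u + jac_det G x = 0 /\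
  v * (jac_trace G x - 2 * u) = 0.
Proof.
unfold eigenvalue, jac_trace, jac_det, Cminus, Cmult, Cplus, Copp, RtoC; simpl.
split.
- intros H; injection H as Hre Him; split; nra.
- intros [Hre Him]; f_equal; nra.
Qed.

Lemma eigenvalue_0 G x : jac_det G x = 0 -> eigenvalue G x (RtoC 0).
Proof. intros Hdet; apply eigenvalue_iff; rewrite Hdet; split; ring. Qed.

Lemma lin_stable_of_trace_det G x :
  jac_trace G x < 0 -> 0 < jac_det G x -> lin_stable G x.
Proof.
intros Htr Hdet [u v] Heig; apply eigenvalue_iff in Heig as [Hre Him]; simpl.
destruct (Req_dec v 0) as [-> | Hv].
- nra.
- assert (jac_trace G x - 2 * u = 0) by (apply (Rmult_eq_reg_l v); lra).
  lra.
Qed.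

Lemma lin_unstable_of_det_neg G x : jac_det G x < 0 -> lin_unstable G x.
Proof.
intros Hdet.
set (tr := jac_trace G x).
set (s := sqrt (tr * tr - 4 * jac_det G x)).
assert (Hs : s * s = tr * tr - 4 * jac_det G x) by (apply sqrt_sqrt; nra).
assert (0 <= s) by apply sqrt_pos.
exists ((tr + s) / 2, 0); split.
- apply eigenvalue_iff; fold tr; split; [| ring].
  replace (jac_det G x) with ((tr * tr - s * s) / 4) by lra.
  field.
- simpl; nra.
Qed.

Lemma locally_lt (f g : R -> R) x :
  continuity_pt f x -> continuity_pt g x -> f x < g x ->
  locally x (fun y => f y < g y).
Proof.
intros Hf Hg Hlt.
apply (filter_imp (fun y => 0 < g y - f y)); [intros y; lra |].
apply (locally_pt_comp _ (fun y => g y - f y) x); [apply open_gt; lra | reg].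
Qed.

Lemma locally_Rabs (P : R -> Prop) x :
  locally x P -> exists delta, 0 < delta /\ forall y, Rabs (y - x) < delta -> P y.
Proof. intros [eps Heps]; exists eps; split; [apply cond_pos | exact Heps]. Qed.

Lemma quadratic_root a b c s : a <> 0 -> s * s = b ^ 2 - 4 * a * c ->
  a * ((- b + s) / (2 * a)) ^ 2 + b * ((- b + s) / (2 * a)) + c = 0.
Proof.
intros Ha Hs.
replace (a * ((- b + s) / (2 * a)) ^ 2 + b * ((- b + s) / (2 * a)) + c)
  with ((s * s - (b ^ 2 - 4 * a * c)) / (4 * a)) by (field; exact Ha).
rewrite Hs; unfold Rdiv; ring.
Qed.

Lemma sign_mul_of_factor L g h a d :
  L * h = d -> d <> 0 -> 0 < a * g -> 0 < a * h -> 0 < d * (L * g).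
Proof.
intros <- Hd Hg Hh.
assert (L <> 0) by (intros ->; apply Hd; ring).
assert (Hpos : 0 < (L * L) * ((a * g) * (a * h))) by (apply Rmult_lt_0_compat; nra).
replace ((L * L) * ((a * g) * (a * h))) with ((a * a) * (L * h * (L * g))) in Hpos
  by ring.
apply (Rmult_lt_reg_l (a * a)); [nra | lra].
Qed.

Section CarT.

Variables m1 m2 m3 m5 : R.
Hypotheses (h2 : 0 < m2) (h3 : 0 < m3) (h5 : 0 < m5).

Let F := field m1 m2 m3 m5.
Let k := m2 / (1 + m3 / m5).

Lemma J11_field mu C L : 1 + L <> 0 -> 1 + m3 * C <> 0 ->
  J11 (F mu) (C, L) = m1 * (L / (1 + L)) - m2 * (L / (1 + m3 * C) ^ 2) - mu.
Proof.
intros HL HC; unfold J11, F, field, dC; simpl.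
apply is_derive_unique; auto_derive; [auto | field; auto].
Qed.

Lemma J12_field mu C L : 1 + L <> 0 -> 1 + m3 * C <> 0 ->
  J12 (F mu) (C, L) = m1 * C / (1 + L) ^ 2 - m2 * C / (1 + m3 * C).
Proof.
intros HL HC; unfold J12, F, field, dC; simpl.
apply is_derive_unique; auto_derive; [auto | field; auto].
Qed.

Lemma J21_field mu C L : J21 (F mu) (C, L) = - m5 * L.
Proof.
unfold J21, F, field, dL; simpl.
apply is_derive_unique; auto_derive; [auto | ring].
Qed.

Lemma J22_field mu C L : J22 (F mu) (C, L) = 1 - m5 * C.
Proof.
unfold J22, F, field, dL; simpl.
apply is_derive_unique; auto_derive; [auto | ring].
Qed.

Lemma jac_trace_Eq1 mu : 0 < mu -> jac_trace (F mu) (Eq1 mu) = 1 - m5 / mu - mu.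
Proof.
intros Hmu.
assert (0 < m3 * (1 / mu)) by (apply Rmult_lt_0_compat; [lra | apply Rdiv_lt_0_compat; lra]).
unfold jac_trace, Eq1; rewrite J11_field, J22_field by lra.
field; lra.
Qed.

Lemma jac_det_Eq1 mu : 0 < mu -> jac_det (F mu) (Eq1 mu) = m5 - mu.
Proof.
intros Hmu.
assert (0 < m3 * (1 / mu)) by (apply Rmult_lt_0_compat; [lra | apply Rdiv_lt_0_compat; lra]).
unfold jac_det, Eq1; rewrite J11_field, J12_field, J21_field, J22_field by lra.
field; lra.
Qed.

Lemma jac_trace_branch mu L : 1 + L <> 0 ->
  jac_trace (F mu) (1 / m5, L) = m1 * (L / (1 + L)) - m2 * (L / (1 + m3 / m5) ^ 2) - mu.
Proof.
intros HL; assert (0 < m3 / m5) by (apply Rdiv_lt_0_compat; lra).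
unfold jac_trace; rewrite J11_field, J22_field by (unfold Rdiv in *; lra).
unfold Rdiv; field; lra.
Qed.

Lemma jac_det_branch mu L : 1 + L <> 0 ->
  jac_det (F mu) (1 / m5, L) = L * (m1 / (1 + L) ^ 2 - k).
Proof.
intros HL; assert (0 < m3 / m5) by (apply Rdiv_lt_0_compat; lra).
unfold jac_det, k.
rewrite J11_field, J12_field, J21_field, J22_field by (unfold Rdiv in *; lra).
field; lra.
Qed.

Lemma Eq1_equilibrium mu : 0 < mu -> is_equilibrium (F mu) (Eq1 mu).
Proof.
intros Hmu; unfold is_equilibrium, F, field, dC, dL, Eq1; simpl.
f_equal; field; lra.
Qed.

Lemma dC_branch mu L : 1 + L <> 0 ->
  dC m1 m2 m3 mu (1 / m5) L * (m5 * (1 + L)) =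
  qa m2 m3 m5 * L ^ 2 + qb m1 m2 m3 mu m5 * L + qc mu m5.
Proof.
intros HL; assert (0 < m3 / m5) by (apply Rdiv_lt_0_compat; lra).
unfold dC, qa, qb, qc; field; repeat split; lra.
Qed.

Lemma branch_equilibrium mu L : 1 + L <> 0 ->
  qa m2 m3 m5 * L ^ 2 + qb m1 m2 m3 mu m5 * L + qc mu m5 = 0 ->
  is_equilibrium (F mu) (1 / m5, L).
Proof.
intros HL Hq; unfold is_equilibrium, F, field; simpl; f_equal.
- rewrite <- (dC_branch mu L HL) in Hq.
  apply Rmult_integral in Hq as [Hq | Hq]; [exact Hq | nra].
- unfold dL; field; lra.
Qed.

Lemma branch_factor mu L :
  qa m2 m3 m5 * L ^ 2 + qb m1 m2 m3 mu m5 * L + qc mu m5 = 0 ->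
  L * (m1 + m5 - mu - k - k * L) = mu - m5.
Proof. unfold qa, qb, qc, k; intros Hq; nra. Qed.

Lemma jac_det_branch_sign mu L : 0 < 1 + L ->
  qa m2 m3 m5 * L ^ 2 + qb m1 m2 m3 mu m5 * L + qc mu m5 = 0 ->
  0 < (m1 - k) * (m1 / (1 + L) ^ 2 - k) ->
  0 < (m1 - k) * (m1 + m5 - mu - k - k * L) ->
  mu <> m5 -> 0 < (mu - m5) * jac_det (F mu) (1 / m5, L).
Proof.
intros HL Hq Hg Hh Hmu; rewrite jac_det_branch by lra.
exact (sign_mul_of_factor _ _ _ _ _ (branch_factor mu L Hq)
         ltac:(lra) Hg Hh).
Qed.

Lemma Eq1_stable mu : 0 < mu < m5 -> lin_stable (F mu) (Eq1 mu).
Proof.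
intros Hmu; apply lin_stable_of_trace_det.
- rewrite jac_trace_Eq1 by lra.
  assert (m5 / mu * mu = m5) by (field; lra).
  nra.
- rewrite jac_det_Eq1; lra.
Qed.

Lemma Eq1_unstable mu : m5 < mu -> lin_unstable (F mu) (Eq1 mu).
Proof. intros Hmu; apply lin_unstable_of_det_neg; rewrite jac_det_Eq1; lra. Qed.

Lemma branch_exchange_stability mu L : 0 < mu -> 0 < 1 + L ->
  qa m2 m3 m5 * L ^ 2 + qb m1 m2 m3 mu m5 * L + qc mu m5 = 0 ->
  m1 * (L / (1 + L)) - m2 * (L / (1 + m3 / m5) ^ 2) - mu < 0 ->
  0 < (m1 - k) * (m1 / (1 + L) ^ 2 - k) ->
  0 < (m1 - k) * (m1 + m5 - mu - k - k * L) ->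
  (mu < m5 -> lin_stable (F mu) (Eq1 mu) /\ lin_unstable (F mu) (1 / m5, L)) /\
  (m5 < mu -> lin_unstable (F mu) (Eq1 mu) /\ lin_stable (F mu) (1 / m5, L)).
Proof.
intros Hmu HL Hq Htr Hg Hh; split; intros Hlt.
- assert (Hdet := jac_det_branch_sign mu L HL Hq Hg Hh ltac:(lra)).
  split; [apply Eq1_stable; lra | apply lin_unstable_of_det_neg; nra].
- assert (Hdet := jac_det_branch_sign mu L HL Hq Hg Hh ltac:(lra)).
  split; [apply Eq1_unstable; lra |].
  apply lin_stable_of_trace_det; [rewrite jac_trace_branch; lra | nra].
Qed.

Lemma branch_transcritical (Ls : R -> R) :
  continuity_pt Ls m5 -> Ls m5 = 0 ->
  locally m5 (fun mu =>
    qa m2 m3 m5 * Ls mu ^ 2 + qb m1 m2 m3 mu m5 * Ls mu + qc mu m5 = 0) ->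
  m1 <> k ->
  transcritical F Eq1 (fun mu => (1 / m5, Ls mu)) m5.
Proof.
intros HLs HLs0 Hquad Hk.
assert (Hr : 0 < m3 / m5) by (apply Rdiv_lt_0_compat; lra).
assert (Hmk : 0 < (m1 - k) * (m1 - k)) by (apply Rsqr_pos_lt; lra).
assert (Hnear : locally m5 (fun mu =>
  (0 < mu /\ qa m2 m3 m5 * Ls mu ^ 2 + qb m1 m2 m3 mu m5 * Ls mu + qc mu m5 = 0) /\
  (0 < 1 + Ls mu /\
   m1 * (Ls mu / (1 + Ls mu)) - m2 * (Ls mu / (1 + m3 / m5) ^ 2) - mu < 0) /\
  0 < (m1 - k) * (m1 / (1 + Ls mu) ^ 2 - k) /\
  0 < (m1 - k) * (m1 + m5 - mu - k - k * Ls mu))).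
{ repeat apply filter_and; try exact Hquad;
    apply locally_lt; try reg; rewrite ?HLs0; try lra.
  all: replace (1 + 0) with 1 by ring; lra. }
destruct (locally_Rabs _ _ Hnear) as [delta [Hdelta Hpt]].
exists delta; split; [exact Hdelta |].
split.
{ intros mu Hmu; destruct (Hpt mu Hmu) as [[Hmu0 Hq] [[HL _] _]].
  split; [apply Eq1_equilibrium | apply branch_equilibrium]; lra. }
repeat split; try (apply continuity_pt_filterlim; unfold Eq1; simpl; reg; lra).
- unfold Eq1; rewrite HLs0; reflexivity.
- apply eigenvalue_0; rewrite jac_det_Eq1; lra.
- intros mu [Hne Hmu] Heq; injection Heq as Heq.
  destruct (Hpt mu Hmu) as [[Hmu0 _] _].
  assert (mu = m5) by (apply (Rdiv_eq_reg_l 1); [exact Heq | lra]).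
  subst mu; rewrite Rminus_diag, Rabs_R0 in Hne; lra.
- left; split; intros mu Hmu;
    destruct (Hpt mu ltac:(apply Rabs_def1; lra)) as [[Hmu0 Hq] [[HL Htr] [Hg Hh]]];
    apply (branch_exchange_stability mu (Ls mu)); lra.
Qed.

Lemma m1_sub_k : (m1 - k) * (1 + m3 / m5) = m1 * (1 + m3 / m5) - m2.
Proof. assert (0 < m3 / m5) by (apply Rdiv_lt_0_compat; lra); unfold k; field; lra. Qed.

Lemma qa_neq0 : qa m2 m3 m5 <> 0.
Proof.
assert (0 < m3 / m5) by (apply Rdiv_lt_0_compat; lra).
assert (0 < m2 / (1 + m3 / m5)) by (apply Rdiv_lt_0_compat; lra).
unfold qa; lra.
Qed.

Lemma qDelta_m5 : qDelta m1 m2 m3 m5 m5 = (m1 - k) ^ 2.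
Proof. unfold qDelta, qa, qb, qc, k; ring. Qed.

Lemma qb_m5 : qb m1 m2 m3 m5 m5 = m1 - k.
Proof. unfold qb, k; ring. Qed.

Lemma qDelta_locally_pos :
  m1 <> k -> locally m5 (fun mu => 0 < qDelta m1 m2 m3 mu m5).
Proof.
intros Hk; apply (locally_lt (fun _ => 0)); [reg | unfold qDelta, qa, qb, qc; reg |].
rewrite qDelta_m5; apply pow2_gt_0; lra.
Qed.

Lemma L2_root mu : 0 <= qDelta m1 m2 m3 mu m5 ->
  qa m2 m3 m5 * L2 m1 m2 m3 mu m5 ^ 2 + qb m1 m2 m3 mu m5 * L2 m1 m2 m3 mu m5
  + qc mu m5 = 0.
Proof.
intros HD.
apply (quadratic_root _ _ _ (- sqrt (qDelta m1 m2 m3 mu m5))); [exact qa_neq0 |].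
rewrite <- Ropp_mult_distr_l, <- Ropp_mult_distr_r, Ropp_involutive, sqrt_sqrt by exact HD.
reflexivity.
Qed.

Lemma L3_root mu : 0 <= qDelta m1 m2 m3 mu m5 ->
  qa m2 m3 m5 * L3 m1 m2 m3 mu m5 ^ 2 + qb m1 m2 m3 mu m5 * L3 m1 m2 m3 mu m5
  + qc mu m5 = 0.
Proof.
intros HD; apply quadratic_root; [exact qa_neq0 |].
rewrite sqrt_sqrt by exact HD; reflexivity.
Qed.

Lemma continuity_L2 : continuity_pt (fun mu => L2 m1 m2 m3 mu m5) m5.
Proof.
pose proof qa_neq0; unfold L2, qDelta, qb, qa, qc in *; reg.
rewrite Rminus_diag, Rmult_0_r, Rminus_0_r; apply pow2_ge_0.
Qed.

Lemma continuity_L3 : continuity_pt (fun mu => L3 m1 m2 m3 mu m5) m5.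
Proof.
pose proof qa_neq0; unfold L3, qDelta, qb, qa, qc in *; reg.
rewrite Rminus_diag, Rmult_0_r, Rminus_0_r; apply pow2_ge_0.
Qed.

Lemma L2_m5 : m1 < k -> L2 m1 m2 m3 m5 m5 = 0.
Proof.
intros Hk; unfold L2; rewrite qDelta_m5, qb_m5.
replace ((m1 - k) ^ 2) with ((k - m1) ^ 2) by ring; rewrite sqrt_pow2 by lra.
replace (- (m1 - k) - (k - m1)) with 0 by ring; unfold Rdiv; ring.
Qed.

Lemma L3_m5 : k < m1 -> L3 m1 m2 m3 m5 m5 = 0.
Proof.
intros Hk; unfold L3; rewrite qDelta_m5, qb_m5, sqrt_pow2 by lra.
replace (- (m1 - k) + (m1 - k)) with 0 by ring; unfold Rdiv; ring.
Qed.

End CarT.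

Theorem theorem5 (m1 m2 m3 m5 : R)
  (h1 : 0 < m1) (h2 : 0 < m2) (h3 : 0 < m3) (h5 : 0 < m5) :
  (m2 > m1 * (1 + m3 / m5) ->
     transcritical (field m1 m2 m3 m5) Eq1 (Eq2 m1 m2 m3 m5) m5) /\
  (m2 < m1 * (1 + m3 / m5) ->
     transcritical (field m1 m2 m3 m5) Eq1 (Eq3 m1 m2 m3 m5) m5).
Proof.
assert (0 < m3 / m5) by (apply Rdiv_lt_0_compat; lra).
pose proof (m1_sub_k m1 m2 m3 m5 h3 h5).
split; intros Hm.
- assert (m1 < m2 / (1 + m3 / m5)) by nra.
  apply (branch_transcritical _ _ _ _ h3 h5 (fun mu => L2 m1 m2 m3 mu m5)).
  + apply continuity_L2; assumption.
  + apply L2_m5; assumption.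
  + apply (filter_imp (fun mu => 0 < qDelta m1 m2 m3 mu m5)).
    * intros mu HD; apply L2_root; lra.
    * apply qDelta_locally_pos; lra.
  + lra.
- assert (m2 / (1 + m3 / m5) < m1) by nra.
  apply (branch_transcritical _ _ _ _ h3 h5 (fun mu => L3 m1 m2 m3 mu m5)).
  + apply continuity_L3; assumption.
  + apply L3_m5; assumption.
  + apply (filter_imp (fun mu => 0 < qDelta m1 m2 m3 mu m5)).
    * intros mu HD; apply L3_root; lra.
    * apply qDelta_locally_pos; lra.
  + lra.
Qed.
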